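(* Let $m\ge2$ and $z_0,\dots,z_{m-1}\in\mathbb C\setminus\{0\}$ with $z_i/z_j\notin\mathbb R$ for $i\ne j$. Then $$\Omega=\Big\{z\in\mathbb C:\sum_{j=0}^{m-1}|z\wedge z_j|\le1\Big\}$$ is a convex, centrally symmetric $2m$-gon with vertices at $\pm\tau_jz_j$, $j=0,\dots,m-1$, where $$\tau_j=\Big(\sum_{i=0,\,i\ne j}^{m-1}|z_j\wedge z_i|\Big)^{-1}.$$
   Context: For $z,w\in\mathbb C$, $|z\wedge w|$ denotes the area of the parallelogram spanned by $z$ and $w$, i.e. $|\operatorname{Im}(\bar z w)|$. *)

From HB Require Import structures.
From mathcomp Require Import all_boot all_order all_algebra.
From mathcomp Require Import complex.
From mathcomp Require Import reals.
Set Implicit Arguments. Unset Strict Implicit. Unset Printing Implicit Defensive.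
Import Order.TTheory GRing.Theory Num.Theory.
Local Open Scope ring_scope.
Local Open Scope complex_scope.

(* |z /\ w| = |Im(conj z * w)|, the area of the parallelogram spanned by z, w *)
Definition wedge (R : rcfType) (z w : R[i]) : R := `| complex.Im (z^* * w) |.

Definition in_conv (R : rcfType) (I : finType) (A : {pred I}) (V : I -> R[i])
    (w : R[i]) : Prop :=
  exists lam : I -> R,
    [/\ forall k, 0 <= lam k,
        forall k, k \notin A -> lam k = 0,
        \sum_k lam k = 1
      & w = \sum_k (lam k)%:C * V k].

From HB Require Import structures.
From mathcomp Require Import all_boot all_order all_algebra.
From mathcomp Require Import complex.
From mathcomp Require Import reals.
From mathcomp Require Import ring lra.
Set Implicit Arguments. Unset Strict Implicit. Unset Printing Implicit Defensive.
Import Order.TTheory GRing.Theory Num.Theory.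
Local Open Scope ring_scope.
Local Open Scope complex_scope.

(* The map [gauge w = \sum_j |w /\ z_j|] is a seminorm equal to 1 at every
   [+-tau_j z_j], so the convex hull of these points lies in Omega. Conversely,
   write [w = al v + be v'] with [al, be >= 0] and vertices [v, v'] in two
   directions [j != k]; the weight [al + be] depends only on [(j, k)], so take a
   pair of least weight. If [gauge w < al + be], the triangle inequality is strict
   at some [z_l], whose line then separates [v] from [v']: a vertex [+-tau_l z_l]
   lies in the open cone of [v, v'] with coefficients of sum > 1, and trading it
   for [v] or [v'] lowers the weight. Hence [al + be <= gauge w <= 1], and the
   missing weight is split between [tau_j z_j] and [-tau_j z_j]. A vertex
   [V = +-tau_j z_j] is extreme: the linear functional
   [v |-> \sum_(l != j) sg (V /\ z_l) (v /\ z_l)] is 1 at [V] and smaller at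
   every other vertex. *)

Lemma ltr_normD_mul_lt0 (R : realDomainType) (x y : R) :
  (`|x + y| < `|x| + `|y|) = (x * y < 0).
Proof.
apply/idP/idP => [|xy_lt0].
  case: (lerP 0 x) => hx; case: (lerP 0 y) => hy;
    rewrite ?(ger0_norm hx) ?(ltr0_norm hx) ?(ger0_norm hy) ?(ltr0_norm hy) ltr_norml;
    move=> /andP[]; nra.
case: (lerP 0 x) => hx; case: (lerP 0 y) => hy;
  rewrite ?(ger0_norm hx) ?(ltr0_norm hx) ?(ger0_norm hy) ?(ltr0_norm hy) ltr_norml;
  apply/andP; split; nra.
Qed.

Section Cross.
Variable R : rcfType.
Implicit Types (x y v w : R[i]) (r : R).

Definition cross x y : R := complex.Im (x^* * y).

Lemma crossE x y :
  cross x y = complex.Re x * complex.Im y - complex.Im x * complex.Re y.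
Proof. by case: x => a b; case: y => c d; rewrite /cross /=; ring. Qed.

Lemma wedgeE x y : wedge x y = `|cross x y|.
Proof. by []. Qed.

Lemma crossDl x y v : cross (x + y) v = cross x v + cross y v.
Proof. by rewrite !crossE; case: x => a b; case: y => c d /=; ring. Qed.

Lemma crossZl r x v : cross (r%:C * x) v = r * cross x v.
Proof. by rewrite !crossE; case: x => a b /=; ring. Qed.

Lemma crossZr r x v : cross x (r%:C * v) = r * cross x v.
Proof. by rewrite !crossE; case: v => a b /=; ring. Qed.

Lemma crossNl x v : cross (- x) v = - cross x v.
Proof. by rewrite !crossE; case: x => a b /=; ring. Qed.

Lemma crossxx x : cross x x = 0.
Proof. by rewrite crossE; ring. Qed.

Lemma crossC x y : cross y x = - cross x y.
Proof. by rewrite !crossE; ring. Qed.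

(* [x / y] is a positive multiple of [x * conj y], whose imaginary part is [cross y x]. *)
Lemma cross_neq0 x y : y != 0 -> x / y \notin Num.real -> cross y x != 0.
Proof.
move=> y_neq0; apply: contra => /eqP cross0.
have -> : x / y = (x * y^*) / (y * y^*).
  by rewrite -mulf_div divff ?mulr1 // conjc_eq0.
have -> :
    x * y^* = (complex.Re x * complex.Re y + complex.Im x * complex.Im y)%:C.
  move: cross0; rewrite crossE; case: x y {y_neq0} => c d [a b] /= cross0.
  by apply/eqP; rewrite eq_complex /=; apply/andP; split; apply/eqP; [ring|lra].
have -> : y * y^* = ((complex.Re y) ^+ 2 + (complex.Im y) ^+ 2)%:C.
  by case: y {y_neq0 cross0} => a b; apply/eqP; rewrite eq_complex /=;
    apply/andP; split; apply/eqP; ring.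
by rewrite -fmorph_div realE !lecE /= eqxx /=; case: lerP => // /ltW ->.
Qed.

Lemma cross_decomp x y w : cross x y != 0 ->
  w = (cross w y / cross x y)%:C * x + (cross w x / cross y x)%:C * y.
Proof.
rewrite (crossC x y) !crossE; case: x => a b; case: y => c d; case: w => e f /= h.
by apply/eqP; rewrite eq_complex /=; apply/andP; split; apply/eqP; field.
Qed.

(* [C] counts as one unit although it is worth [ga + de > 1] units of [A] and [B],
   so trading part of [A] or of [B] for [C] lowers the total weight. *)
Lemma cone_exchange (A B C w : R[i]) (al be ga de : R) :
  0 < al -> 0 < be -> 0 < ga -> 0 < de -> 1 < ga + de ->
  C = ga%:C * A + de%:C * B -> w = al%:C * A + be%:C * B ->
  exists x y : R, [/\ 0 <= x, 0 <= y, x + y < al + be &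
    w = x%:C * A + y%:C * C \/ w = x%:C * C + y%:C * B].
Proof.
move=> al_gt0 be_gt0 ga_gt0 de_gt0 gade_gt1 -> ->.
have [le|lt] := lerP (be * ga) (al * de).
- pose q := be / de.
  have qde : q * de = be by rewrite /q divfK ?gt_eqF.
  have q_gt0 : 0 < q by rewrite /q divr_gt0.
  exists (al - ga * q), q; split; [nra | nra | nra | left].
  by rewrite -qde !(rmorphB, rmorphM) /=; ring.
- pose q := al / ga.
  have qga : q * ga = al by rewrite /q divfK ?gt_eqF.
  have q_gt0 : 0 < q by rewrite /q divr_gt0.
  exists q, (be - de * q); split; [nra | nra | nra | right].
  by rewrite -qga !(rmorphB, rmorphM) /=; ring.
Qed.

Lemma cone_meets_line (A B C v : R[i]) :
  cross A B != 0 -> C != 0 -> cross C v = 0 -> cross A v * cross B v < 0 ->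
  exists ga de : R, [/\ 0 < ga, 0 < de &
    C = ga%:C * A + de%:C * B \/ - C = ga%:C * A + de%:C * B].
Proof.
move=> AB_neq0 C_neq0 Cv0 ABv_lt0.
set ga := cross C B / cross A B; set de := cross C A / cross B A.
have eC : C = ga%:C * A + de%:C * B := cross_decomp C AB_neq0.
have comb0 : ga * cross A v + de * cross B v = 0.
  by rewrite -Cv0 [in RHS]eC crossDl !crossZl.
have Bv_neq0 : cross B v != 0 by apply: contraTneq ABv_lt0 => ->; rewrite mulr0 ltxx.
have de_neq0 : de != 0.
  apply: contra_neq C_neq0 => de0; rewrite eC de0 mul0r addr0.
  have Av_neq0 : cross A v != 0 by apply: contraTneq ABv_lt0 => ->; rewrite mul0r ltxx.
  move: comb0; rewrite de0 mul0r addr0 => /eqP; rewrite mulf_eq0 (negbTE Av_neq0) orbF.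
  by move=> /eqP ->; rewrite mul0r.
have gade_gt0 : 0 < ga * de.
  have : ga * de * (cross A v * cross B v) = - (de * cross B v) ^+ 2.
    have gaAv : ga * cross A v = - (de * cross B v) by apply/eqP; rewrite -addr_eq0 comb0.
    by rewrite mulrACA gaAv mulNr -expr2.
  have : 0 < (de * cross B v) ^+ 2 by rewrite exprn_even_gt0 // mulf_neq0.
  nra.
have [ga_gt0|ga_le0] := ltrP 0 ga.
  by exists ga, de; split; [| rewrite -(pmulr_rgt0 _ ga_gt0) | left].
exists (- ga), (- de); split; [nra | nra | right].
by rewrite {1}eC !rmorphN !mulNr opprD.
Qed.

End Cross.

Section ConvexHull.
Variables (R : rcfType) (I : finType) (V : I -> R[i]).

Lemma in_conv_opp_pair u u' x y (al be : R) w :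
  V u + V u' = 0 -> 0 <= al -> 0 <= be -> al + be <= 1 ->
  w = al%:C * V x + be%:C * V y -> in_conv predT V w.
Proof.
move=> opp_uu' al_ge0 be_ge0 albe_le1 ->.
pose h := (1 - al - be) / 2.
pose ind (a : R) (p q : I) : R := a * (p == q)%:R.
have sum_ind a q : \sum_p ind a p q = a.
  by rewrite (bigD1 q) //= /ind eqxx mulr1 big1 ?addr0 // => p /negbTE ->; rewrite mulr0.
have sumV_ind a q : \sum_p (ind a p q)%:C * V p = a%:C * V q.
  rewrite (bigD1 q) //= /ind eqxx mulr1 big1 ?addr0 // => p /negbTE ->.
  by rewrite mulr0 mul0r.
exists (fun p => ind al p x + ind be p y + ind h p u + ind h p u'); split.
- by move=> p; rewrite !addr_ge0 // mulr_ge0 // /h; lra.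
- by move=> k; rewrite inE.
- by rewrite !big_split /= !sum_ind /h; field.
- under eq_bigr => p _ do rewrite !rmorphD !mulrDl.
  by rewrite !big_split /= !sumV_ind -addrA -mulrDr opp_uu' mulr0 addr0.
Qed.

Variable phi : R[i] -> R.
Hypothesis phiD : forall x y, phi (x + y) <= phi x + phi y.
Hypothesis phiZ : forall (r : R) x, 0 <= r -> phi (r%:C * x) = r * phi x.

Lemma sublinear_sum (lam : I -> R) : (forall k, 0 <= lam k) ->
  phi (\sum_k (lam k)%:C * V k) <= \sum_k lam k * phi (V k).
Proof.
move=> lam_ge0; elim/big_ind2: _ => [| x1 y1 x2 y2 le1 le2 | k _].
- by rewrite -(mul0r 0) -[0 * 0]/((0 : R)%:C * 0) phiZ ?mul0r.
- exact: le_trans (phiD _ _) (lerD le1 le2).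
- by rewrite phiZ.
Qed.

Lemma in_conv_sublinear_le (A : {pred I}) (c : R) w :
  (forall k, k \in A -> phi (V k) <= c) -> in_conv A V w -> phi w <= c.
Proof.
move=> le_c [lam [lam_ge0 lam_out sum1 ->]].
apply: le_trans (sublinear_sum lam_ge0) _.
rewrite -[c]mul1r -sum1 mulr_suml; apply: ler_sum => k _.
case: (boolP (k \in A)) => kA; first by rewrite ler_wpM2l ?le_c.
by rewrite lam_out // !mul0r.
Qed.

Lemma in_conv_sublinear_lt (A : {pred I}) (c : R) w :
  (forall k, k \in A -> phi (V k) < c) -> in_conv A V w -> phi w < c.
Proof.
move=> lt_c [lam [lam_ge0 lam_out sum1 ->]].
have [k lam_k_gt0] : exists k, 0 < lam k.
  apply/existsP; apply: contraT => /existsPn lam_le0.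
  have : \sum_k lam k = 0.
    by apply: big1 => k _; apply/eqP; rewrite eq_le lam_ge0 andbT leNgt lam_le0.
  by move/eqP; rewrite sum1 oner_eq0.
have kA : k \in A by apply: contraLR lam_k_gt0 => /lam_out ->; rewrite ltxx.
apply: le_lt_trans (sublinear_sum lam_ge0) _.
rewrite -[c]mul1r -sum1 mulr_suml (bigD1 k) //= [X in _ < X](bigD1 k) //=.
apply: ltr_leD; first by rewrite ltr_pM2l ?lt_c.
apply: ler_sum => l _.
case: (boolP (l \in A)) => lA; first by rewrite ler_wpM2l // ltW ?lt_c.
by rewrite lam_out // !mul0r.
Qed.

End ConvexHull.

Section Gauge.
Variables (R : rcfType) (m : nat) (z : 'I_m -> R[i]).
Implicit Types (x y w : R[i]) (r : R).

Definition gauge w : R := \sum_(j < m) wedge w (z j).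

Lemma gaugeD x y : gauge (x + y) <= gauge x + gauge y.
Proof.
by rewrite /gauge -big_split; apply: ler_sum => j _; rewrite !wedgeE crossDl ler_normD.
Qed.

Lemma gaugeZ r x : gauge (r%:C * x) = `|r| * gauge x.
Proof. by rewrite /gauge mulr_sumr; apply: eq_bigr => j _; rewrite !wedgeE crossZl normrM. Qed.

Lemma gaugeD_ltP x y :
  reflect (exists i, cross x (z i) * cross y (z i) < 0)
          (gauge (x + y) < gauge x + gauge y).
Proof.
apply: (iffP idP) => [lt_sum | [i opp_i]].
  have [i opp_i | no_opp] := pickP (fun i => cross x (z i) * cross y (z i) < 0).
    by exists i.
  suff eq_sum : gauge (x + y) = gauge x + gauge y by move: lt_sum; rewrite eq_sum ltxx.
  rewrite /gauge -big_split; apply: eq_bigr => j _ /=; apply/eqP.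
  by rewrite eq_le !wedgeE crossDl ler_normD leNgt ltr_normD_mul_lt0 no_opp.
rewrite /gauge -big_split /= (bigD1 i) //= [X in _ < X](bigD1 i) //=.
apply: ltr_leD; first by rewrite !wedgeE crossDl ltr_normD_mul_lt0.
by apply: ler_sum => j _; rewrite !wedgeE crossDl ler_normD.
Qed.

End Gauge.

Section Polygon.
Variables (R : rcfType) (m : nat) (z : 'I_m -> R[i]).
Hypotheses (m_ge2 : (2 <= m)%N) (z_neq0 : forall j, z j != 0)
  (z_nonreal : forall i j, i != j -> z i / z j \notin Num.real).

Definition sgn (s : bool) : R := if s then -1 else 1.

Definition tau (j : 'I_m) : R := (\sum_(i < m | i != j) wedge (z j) (z i))^-1.

Definition vert (p : bool * 'I_m) : R[i] :=
  (if p.1 then -1 else 1) * ((tau p.2)%:C * z p.2).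

Lemma cross_z_neq0 i j : i != j -> cross (z i) (z j) != 0.
Proof. by move=> ij; apply: cross_neq0 (z_neq0 i) _; apply: z_nonreal; rewrite eq_sym. Qed.

Lemma exists_other j : exists i : 'I_m, i != j.
Proof.
have [m_gt0 m_gt1] : (0 < m)%N /\ (1 < m)%N by split; [apply: leq_trans m_ge2 |].
have [-> | j_neq0] := eqVneq j (Ordinal m_gt0); first by exists (Ordinal m_gt1).
by exists (Ordinal m_gt0); rewrite eq_sym.
Qed.

Lemma tau_gt0 j : 0 < tau j.
Proof.
have [i ij] := exists_other j.
rewrite invr_gt0 (bigD1 i) //= ltr_pwDl ?sumr_ge0 // => [|k _]; rewrite wedgeE //.
by rewrite normr_gt0 cross_z_neq0 // eq_sym.
Qed.

Lemma sgn_norm s : `|sgn s| = 1.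
Proof. by case: s; rewrite ?normrN normr1. Qed.

Lemma vertE p : vert p = (sgn p.1 * tau p.2)%:C * z p.2.
Proof. by case: p => [[] j]; rewrite /vert /sgn rmorphM /= ?rmorphN1 ?rmorph1 mulrA. Qed.

Lemma cross_vertl p v : cross (vert p) v = sgn p.1 * tau p.2 * cross (z p.2) v.
Proof. by rewrite vertE crossZl. Qed.

Lemma wedge_vertl p v : wedge (vert p) v = tau p.2 * wedge (z p.2) v.
Proof. by rewrite !wedgeE cross_vertl !normrM sgn_norm mul1r gtr0_norm ?tau_gt0. Qed.

Lemma gauge_z j : gauge z (z j) = (tau j)^-1.
Proof. by rewrite /tau invrK /gauge (bigD1 j) //= wedgeE crossxx normr0 add0r. Qed.

Lemma gauge_vert p : gauge z (vert p) = 1.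
Proof.
by rewrite vertE gaugeZ gauge_z normrM sgn_norm mul1r gtr0_norm ?mulfV ?gt_eqF ?tau_gt0.
Qed.

Lemma vert_opp s j : vert (~~ s, j) = - vert (s, j).
Proof. by case: s; rewrite /vert /= ?mulN1r ?mul1r ?opprK. Qed.

Lemma vert_coef_neq0 p : sgn p.1 * tau p.2 != 0.
Proof. by rewrite -normr_eq0 normrM sgn_norm mul1r normr_eq0 gt_eqF ?tau_gt0. Qed.

Lemma vert_neq0 p : vert p != 0.
Proof. by rewrite vertE mulf_neq0 ?z_neq0 // fmorph_eq0 vert_coef_neq0. Qed.

Lemma cross_vert_self p : cross (vert p) (z p.2) = 0.
Proof. by rewrite cross_vertl crossxx mulr0. Qed.

Lemma gauge_scaled_vert p (r : R) : 0 <= r -> gauge z (r%:C * vert p) = r.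
Proof. by move=> r_ge0; rewrite gaugeZ gauge_vert mulr1 ger0_norm. Qed.

Lemma vert_inj : injective vert.
Proof.
move=> [s j] [t k] e.
have kj : k = j.
  apply/eqP; apply: contraT => k_neq_j.
  have := congr1 (fun x => cross x (z j)) e; rewrite /= cross_vert_self => /esym/eqP.
  by rewrite cross_vertl mulf_eq0 (negbTE (vert_coef_neq0 _)) (negbTE (cross_z_neq0 k_neq_j)).
subst k; have [-> // | st] := eqVneq s t.
move: e; have -> : t = ~~ s by case: s t st => [] [].
move=> /eqP; rewrite vert_opp -addr_eq0 -mulr2n mulrn_eq0 /=.
by rewrite (negbTE (vert_neq0 _)).
Qed.

Definition pair_comb (w : R[i]) (j k : 'I_m) (al be : R) :=
  [/\ j != k, 0 <= al, 0 <= be & exists s t, w = al%:C * vert (s, j) + be%:C * vert (t, k)].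

Definition cost (w : R[i]) (j k : 'I_m) : R :=
  wedge w (z k) / (tau j * wedge (z j) (z k)) + wedge w (z j) / (tau k * wedge (z k) (z j)).

Lemma pair_comb_cost w j k al be : pair_comb w j k al be -> al + be = cost w j k.
Proof.
move=> [jk al_ge0 be_ge0 [s [t ew]]].
have wedge_neq0 i l : i != l -> tau i * wedge (z i) (z l) != 0.
  by move=> il; rewrite mulf_neq0 ?(gt_eqF (tau_gt0 _)) // normr_eq0 cross_z_neq0.
rewrite /cost ew !wedgeE !crossDl !crossZl !cross_vertl !crossxx !mulr0 addr0 add0r.
rewrite !normrM !sgn_norm !mul1r !(ger0_norm al_ge0, ger0_norm be_ge0).
by rewrite !(gtr0_norm (tau_gt0 _)) -!wedgeE /= !mulfK ?wedge_neq0 // eq_sym.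
Qed.

Lemma scale_z_vert (a : R) j : exists s al, 0 <= al /\ a%:C * z j = al%:C * vert (s, j).
Proof.
exists (a < 0), (`|a| / tau j); split; first by rewrite divr_ge0 ?normr_ge0 ?ltW ?tau_gt0.
rewrite vertE mulrA -rmorphM /= mulrCA divfK ?(gt_eqF (tau_gt0 _)) // /sgn.
case: (ltrP a 0) => [a_lt0 | a_ge0]; first by rewrite ltr0_norm // mulN1r opprK.
by rewrite ger0_norm // mul1r.
Qed.

Lemma pair_comb_exists w j k : j != k -> exists al be, pair_comb w j k al be.
Proof.
move=> jk; have := cross_decomp w (cross_z_neq0 jk).
have [s [al [al_ge0 ->]]] := scale_z_vert (cross w (z k) / cross (z j) (z k)) j.
have [t [be [be_ge0 ->]]] := scale_z_vert (cross w (z j) / cross (z k) (z j)) k.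
by move=> ew; exists al, be; split => //; exists s, t.
Qed.

Lemma cross_vert_neq0 p q : p.2 != q.2 -> cross (vert p) (vert q) != 0.
Proof.
move=> pq; rewrite !vertE crossZl crossZr.
by rewrite (mulf_neq0 (vert_coef_neq0 p)) ?(mulf_neq0 (vert_coef_neq0 q)) ?cross_z_neq0.
Qed.

Lemma vert_in_cone l A B : cross A B != 0 -> cross A (z l) * cross B (z l) < 0 ->
  exists r ga de, [/\ 0 < ga, 0 < de & vert (r, l) = ga%:C * A + de%:C * B].
Proof.
move=> AB_neq0 opp_l.
have [ga [de [ga_gt0 de_gt0 [eC | eC]]]] :=
  cone_meets_line AB_neq0 (vert_neq0 (false, l)) (cross_vert_self (false, l)) opp_l.
  by exists false, ga, de.
by exists true, ga, de; split => //; apply: etrans (vert_opp false l) eC.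
Qed.

Lemma pair_comb_shorter w j k al be : pair_comb w j k al be -> gauge z w < al + be ->
  exists j' k' al' be', pair_comb w j' k' al' be' /\ al' + be' < al + be.
Proof.
move=> [jk al_ge0 be_ge0 [s [t ew]]] lt_gauge.
set A := vert (s, j); set B := vert (t, k).
have [l] : exists l, cross (al%:C * A) (z l) * cross (be%:C * B) (z l) < 0.
  by apply/gaugeD_ltP; rewrite -ew !gauge_scaled_vert.
rewrite !crossZl mulrACA => opp_l.
have albe_gt0 : 0 < al * be.
  by rewrite lt_def mulr_ge0 // andbT; apply: contraTneq opp_l => ->; rewrite mul0r ltxx.
have al_gt0 : 0 < al.
  by rewrite lt_def al_ge0 andbT; apply: contraTneq albe_gt0 => ->; rewrite mul0r ltxx.
have be_gt0 : 0 < be.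
  by rewrite lt_def be_ge0 andbT; apply: contraTneq albe_gt0 => ->; rewrite mulr0 ltxx.
have AB_l : cross A (z l) * cross B (z l) < 0 by rewrite -(pmulr_rlt0 _ albe_gt0).
have lj : l != j by apply: contraTneq AB_l => ->; rewrite cross_vert_self mul0r ltxx.
have lk : l != k by apply: contraTneq AB_l => ->; rewrite cross_vert_self mulr0 ltxx.
have AB_neq0 : cross A B != 0 by apply: cross_vert_neq0.
have [r [ga [de [ga_gt0 de_gt0 eC]]]] := vert_in_cone AB_neq0 AB_l.
have gade_gt1 : 1 < ga + de.
  suff : gauge z (ga%:C * A + de%:C * B) < gauge z (ga%:C * A) + gauge z (de%:C * B).
    by rewrite -eC gauge_vert !gauge_scaled_vert ?ltW.
  by apply/gaugeD_ltP; exists l; rewrite !crossZl mulrACA pmulr_rlt0 ?mulr_gt0.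
have [x [y [x_ge0 y_ge0 xy_lt [ew' | ew']]]] :=
  cone_exchange al_gt0 be_gt0 ga_gt0 de_gt0 gade_gt1 eC ew.
  by exists j, l, x, y; split => //; split => //; [rewrite eq_sym | exists s, r].
by exists l, k, x, y; split => //; split => //; exists r, t.
Qed.

Lemma gauge_pair_comb w : exists j k al be, pair_comb w j k al be /\ al + be <= gauge z w.
Proof.
have j0 : 'I_m := Ordinal (leq_trans (isT : (0 < 2)%N) m_ge2).
have [k0 k0j0] := exists_other j0.
have [[j k] /= jk cost_min] :=
  @arg_minP _ _ _ (k0, j0) (fun p : 'I_m * 'I_m => p.1 != p.2) (fun p => cost w p.1 p.2) k0j0.
have [al [be comb]] := pair_comb_exists w jk.
exists j, k, al, be; split => //; rewrite leNgt; apply/negP => /(pair_comb_shorter comb).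
move=> [j' [k' [al' [be' [comb' lt']]]]]; move: lt'.
rewrite (pair_comb_cost comb) (pair_comb_cost comb') ltNge (cost_min (j', k')) //.
by case: comb'.
Qed.

Lemma gauge_le1_in_conv w : gauge z w <= 1 -> in_conv predT vert w.
Proof.
move=> w_le1.
have [j [k [al [be [[_ al_ge0 be_ge0 [s [t ew]]] albe_le]]]]] := gauge_pair_comb w.
apply: (in_conv_opp_pair (u := (false, j)) (u' := (true, j)) _ al_ge0 be_ge0 _ ew).
  by rewrite (vert_opp false j) addrN.
exact: le_trans albe_le w_le1.
Qed.

Lemma in_conv_gauge_le1 w : in_conv predT vert w -> gauge z w <= 1.
Proof.
apply: in_conv_sublinear_le => [x y | r x r_ge0 | p _]; first exact: gaugeD.
  by rewrite gaugeZ ger0_norm.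
by rewrite gauge_vert.
Qed.

Definition vert_support (p : bool * 'I_m) (v : R[i]) : R :=
  \sum_(l < m | l != p.2) Num.sg (cross (vert p) (z l)) * cross v (z l).

Lemma vert_supportD p x y : vert_support p (x + y) = vert_support p x + vert_support p y.
Proof. by rewrite /vert_support -big_split; apply: eq_bigr => l _; rewrite crossDl mulrDr. Qed.

Lemma vert_supportZ p r x : vert_support p (r%:C * x) = r * vert_support p x.
Proof. by rewrite /vert_support mulr_sumr; apply: eq_bigr => l _; rewrite crossZl mulrCA. Qed.

Lemma vert_supportN p x : vert_support p (- x) = - vert_support p x.
Proof. by rewrite /vert_support -sumrN; apply: eq_bigr => l _; rewrite crossNl mulrN. Qed.

Lemma vert_support_le p v : vert_support p v <= gauge z v - wedge v (z p.2).
Proof.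
rewrite /gauge (bigD1 p.2) //= addrC addrK; apply: ler_sum => l _.
apply: le_trans (ler_norm _) _; rewrite wedgeE normrM normr_sg.
by case: (_ != 0); rewrite ?mul1r ?mul0r.
Qed.

Lemma vert_support_vert p : vert_support p (vert p) = 1.
Proof.
rewrite /vert_support; under eq_bigr => l _ do rewrite -normrEsg.
by rewrite -(gauge_vert p) /gauge [in RHS](bigD1 p.2) //= wedgeE cross_vert_self normr0 add0r.
Qed.

Lemma vert_support_lt p q : q != p -> vert_support p (vert q) < 1.
Proof.
case: p q => s j [t k] qp; have [kj | kj] := eqVneq k j.
  subst k; have -> : t = ~~ s by case: s t qp => [] []; rewrite ?eqxx.
  by rewrite vert_opp vert_supportN vert_support_vert gtrN.
apply: le_lt_trans (vert_support_le _ _) _.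
rewrite gauge_vert wedge_vertl /= ltrBlDr ltrDl mulr_gt0 ?tau_gt0 //.
by rewrite wedgeE normr_gt0 cross_z_neq0.
Qed.

Lemma vert_extreme p : ~ in_conv (predC1 p) vert (vert p).
Proof.
move=> conv; suff : vert_support p (vert p) < 1 by rewrite vert_support_vert ltxx.
apply: (in_conv_sublinear_lt _ _ _ conv) => [x y | r x _ | q]; first by rewrite vert_supportD.
  exact: vert_supportZ.
by rewrite inE => /vert_support_lt.
Qed.

End Polygon.

Theorem lemma4p10 (R : realType) (m : nat) (z : 'I_m -> R[i]) :
  (2 <= m)%N ->
  (forall j, z j != 0) ->
  (forall i j, i != j -> z i / z j \notin Num.real) ->
  let tau (j : 'I_m) : R := (\sum_(i < m | i != j) wedge (z j) (z i))^-1 in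
  let V (p : bool * 'I_m) : R[i] :=
    (if p.1 then -1 else 1) * ((tau p.2)%:C * z p.2) in
  [/\ forall w : R[i], (\sum_(j < m) wedge w (z j) <= 1) <-> in_conv predT V w,
      injective V
    & forall p, ~ in_conv (predC1 p) V (V p)].
Proof.
move=> m_ge2 z_neq0 z_nonreal tau V; split.
- by move=> w; split; [apply: gauge_le1_in_conv | apply: in_conv_gauge_le1].
- exact: vert_inj.
- exact: vert_extreme.
Qed.
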